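(* Let $U\subset\mathbb{C}$ be a simply connected domain. Let $\phi=(\phi_1,\phi_2,\phi_3):U\to\mathbb{C}^3$ be holomorphic with $\phi_2=\pm\mathrm{i}\phi_1$ (a fixed sign) and $\phi_1$ nowhere zero. Let $\mathbf{x}(z)=\mathrm{Re}\int_{z_0}^z\phi(w)\,\mathrm{d}w$, with $z=u+\mathrm{i}v$. Then $\mathbf{x}$ is an admissible simply isotropic minimal immersion, and: $$\mathrm{I}=|\phi_1|^2(\mathrm{d}u^2+\mathrm{d}v^2),$$ $$\mathrm{II}=\mathrm{Re}\Big[\phi_1\Big(\tfrac{\phi_3}{\phi_1}\Big)'\Big](\mathrm{d}u^2-\mathrm{d}v^2)-2\,\mathrm{Im}\Big[\phi_1\Big(\tfrac{\phi_3}{\phi_1}\Big)'\Big]\mathrm{d}u\,\mathrm{d}v,$$ $$K=-\Big|\frac{1}{\phi_1}\Big(\frac{\phi_3}{\phi_1}\Big)'\Big|^2.$$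
   Context: $\mathbb{I}^3$ is $\mathbb{R}^3$ with the degenerate metric $\langle a,b\rangle=a^1b^1+a^2b^2$. A surface is admissible if none of its tangent planes contains the vertical direction $(0,0,1)$. The first fundamental form has coefficients $g_{ij}=\langle\mathbf{x}_i,\mathbf{x}_j\rangle$, where $\mathbf{x}_1=\mathbf{x}_u$ and $\mathbf{x}_2=\mathbf{x}_v$. The minimal normal $\mathbf{N}_m$ is the unique vector of the form $(a,b,1)$ that is Euclidean-orthogonal to $\mathbf{x}_u$ and $\mathbf{x}_v$. The second fundamental form is $\mathrm{II}=h_{11}\mathrm{d}u^2+2h_{12}\mathrm{d}u\mathrm{d}v+h_{22}\mathrm{d}v^2$ with $h_{ij}=\mathbf{x}_{ij}\cdot\mathbf{N}_m$, where $\cdot$ is the Euclidean dot product. The isotropic Gaussian curvature is $K=(h_{11}h_{22}-h_{12}^2)/(g_{11}g_{22}-g_{12}^2)$. Minimal means the isotropic mean curvature $H=(g_{11}h_{22}-2g_{12}h_{12}+g_{22}h_{11})/(2\det g)$ vanishes. *)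

From Stdlib Require Import Reals.
From Coquelicot Require Import Coquelicot.
Open Scope R_scope.

Definition Cderiv (f : C -> C) (z l : C) : Prop :=
  @is_derive C_AbsRing C_NormedModule f z l.

Definition holomorphic_on (U : C -> Prop) (f : C -> C) : Prop :=
  forall z, U z -> exists l, Cderiv f z l.

Definition path_in (U : C -> Prop) (g : R -> C) : Prop :=
  (forall t, continuous g t) /\ (forall t, 0 <= t <= 1 -> U (g t)).

Definition domain (U : C -> Prop) : Prop :=
  open U /\ (exists z, U z) /\
  (forall a b, U a -> U b ->
     exists g, path_in U g /\ g 0 = a /\ g 1 = b).

Definition simply_connected_domain (U : C -> Prop) : Prop :=
  domain U /\
  forall g, path_in U g -> g 0 = g 1 ->
    exists H : R * R -> C,
      (forall p, continuous H p) /\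
      (forall s t, 0 <= s <= 1 -> 0 <= t <= 1 -> U (H (s, t))) /\
      (forall t, 0 <= t <= 1 -> H (0, t) = g t) /\
      (forall t, 0 <= t <= 1 -> H (1, t) = g 0) /\
      (forall s, 0 <= s <= 1 -> H (s, 0) = g 0 /\ H (s, 1) = g 0).

(* F z = ∫_{z0}^z phi(w) dw on U : the holomorphic primitive of phi on U
   vanishing at z0 (well defined and path independent since U is a
   simply connected domain). *)
Definition integral_from (U : C -> Prop) (z0 : C) (phi F : C -> C) : Prop :=
  F z0 = 0%C /\ forall z, U z -> Cderiv F z (phi z).

Definition V3 := (R * R * R)%type.
Definition c1 (a : V3) : R := fst (fst a).
Definition c2 (a : V3) : R := snd (fst a).
Definition c3 (a : V3) : R := snd a.

Definition edot (a b : V3) : R := c1 a * c1 b + c2 a * c2 b + c3 a * c3 b.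
Definition cross (a b : V3) : V3 :=
  (c2 a * c3 b - c3 a * c2 b, c3 a * c1 b - c1 a * c3 b,
   c1 a * c2 b - c2 a * c1 b).
Definition vscale (r : R) (a : V3) : V3 := (r * c1 a, r * c2 a, r * c3 a).
Definition vadd (a b : V3) : V3 := (c1 a + c1 b, c2 a + c2 b, c3 a + c3 b).

Definition idot (a b : V3) : R := c1 a * c1 b + c2 a * c2 b.

Definition surface := R * R -> V3.

Definition pdu (f : R * R -> R) (p : R * R) : R :=
  Derive (fun s => f (s, snd p)) (fst p).
Definition pdv (f : R * R -> R) (p : R * R) : R :=
  Derive (fun s => f (fst p, s)) (snd p).

Definition Du (x : surface) : surface := fun p =>
  (pdu (fun q => c1 (x q)) p, pdu (fun q => c2 (x q)) p, pdu (fun q => c3 (x q)) p).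
Definition Dv (x : surface) : surface := fun p =>
  (pdv (fun q => c1 (x q)) p, pdv (fun q => c2 (x q)) p, pdv (fun q => c3 (x q)) p).

Definition twice_diff_on (U : R * R -> Prop) (f : R * R -> R) : Prop :=
  forall p, U p ->
    ex_filterdiff f (locally p) /\
    ex_filterdiff (pdu f) (locally p) /\
    ex_filterdiff (pdv f) (locally p).

Definition immersion_on (U : R * R -> Prop) (x : surface) : Prop :=
  twice_diff_on U (fun q => c1 (x q)) /\
  twice_diff_on U (fun q => c2 (x q)) /\
  twice_diff_on U (fun q => c3 (x q)) /\
  (forall p, U p -> cross (Du x p) (Dv x p) <> (0, 0, 0)).

Definition admissible_on (U : R * R -> Prop) (x : surface) : Prop :=
  forall p, U p ->
    ~ exists a b : R, vadd (vscale a (Du x p)) (vscale b (Dv x p)) = (0, 0, 1).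

Definition g11 (x : surface) p := idot (Du x p) (Du x p).
Definition g12 (x : surface) p := idot (Du x p) (Dv x p).
Definition g22 (x : surface) p := idot (Dv x p) (Dv x p).

(* minimal normal: the unique (a,b,1) Euclidean-orthogonal to x_u and x_v,
   i.e. the cross product x_u × x_v normalized to third coordinate 1
   (third coordinate nonzero for an admissible surface) *)
Definition Nm (x : surface) p : V3 :=
  let c := cross (Du x p) (Dv x p) in vscale (/ c3 c) c.

Definition h11 (x : surface) p := edot (Du (Du x) p) (Nm x p).
Definition h12 (x : surface) p := edot (Dv (Du x) p) (Nm x p).
Definition h22 (x : surface) p := edot (Dv (Dv x) p) (Nm x p).

Definition detg (x : surface) p := g11 x p * g22 x p - g12 x p ^ 2.

Definition Kiso (x : surface) p :=
  (h11 x p * h22 x p - h12 x p ^ 2) / detg x p.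
Definition Hiso (x : surface) p :=
  (g11 x p * h22 x p - 2 * g12 x p * h12 x p + g22 x p * h11 x p)
  / (2 * detg x p).

From Stdlib Require Import Reals Lra.
From Coquelicot Require Import Coquelicot.
Open Scope R_scope.

(* Let F_i be primitives of holomorphic phi_i on an open set U, with
   phi2 = k phi1 for k = +-i, and x = Re (F1, F2, F3).  The proof is a
   pointwise computation once the derivatives of x are known:

   1. Complex calculus: scaling, local extensionality, the quotient rule
      (via the derivative of 1/w), and the real part of the Cauchy-Riemann
      equations, which show that for Re F with F' = phi we have
      d/du = Re phi and d/dv = Re (i phi); iterating gives the Hessian of x
      as Re (phi', i phi', -phi').
   2. Algebra of the isotropic frame x_u = Re (a, k a, c), x_v = Re (i a, k i a,
      i c): the metric is |a|^2 (du^2 + dv^2), the normal is not horizontal,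
      and the second fundamental form is (Re w, -Im w, -Re w) with
      w = c' - c a'/a = a (c/a)'.
   3. Surface geometry: a non-horizontal normal gives immersion and
      admissibility, and a conformal metric with a trace-free second
      fundamental form of this shape gives H = 0 and K = -|w|^2/|a|^4. *)

(* Cderiv uses the codomain C_NormedModule, while Coquelicot's product rule
   is stated for the ring C viewed as a module over itself; both structures
   share carrier, operations and norm. *)
Lemma Cderiv_absring (f : C -> C) (z l : C) :
  Cderiv f z l <-> @is_derive C_AbsRing (AbsRing_NormedModule C_AbsRing) f z l.
Proof. split; intros [_ Hd]; (split; [apply is_linear_scal_l | exact Hd]). Qed.

Lemma Cderiv_ext_open (U : C -> Prop) (f g : C -> C) (z l : C) :
  open U -> U z -> (forall w, U w -> f w = g w) -> Cderiv f z l -> Cderiv g z l.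
Proof.
  intros HU Hz Hfg Hf. apply (is_derive_ext_loc f); [|exact Hf].
  apply locally_C. exact (filter_imp _ _ Hfg (HU z Hz)).
Qed.

Lemma Cderiv_scal (f : C -> C) (z l k : C) :
  Cderiv f z l -> Cderiv (fun w => (k * f w)%C) z (k * l)%C.
Proof.
  intros Hf. apply (is_derive_ext (fun w => scal (f w) k)).
  { intros w. apply Cmult_comm. }
  replace (k * l)%C with (scal l k) by apply Cmult_comm.
  apply (@is_derive_scal_l C_AbsRing C_NormedModule), Cderiv_absring, Hf.
Qed.

Lemma Cinv_second_order (w y : C) :
  w <> 0%C -> Cmod (y - w) <= Cmod w / 2 ->
  Cmod (/ y - / w - (y - w) * - / (w * w))%C
    <= 2 * Cmod (y - w) ^ 2 / Cmod w ^ 3.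
Proof.
  intros Hw Hyw.
  assert (Hm : 0 < Cmod w) by (apply Cmod_gt_0; exact Hw).
  assert (Hy : Cmod w / 2 <= Cmod y).
  { assert (Htri := Cmod_triangle y (- (y - w))%C).
    rewrite Cmod_opp in Htri.
    replace (y + - (y - w))%C with w in Htri by ring. lra. }
  assert (Hy0 : y <> 0%C) by (apply Cmod_gt_0; lra).
  replace (/ y - / w - (y - w) * - / (w * w))%C
    with ((y - w) * (y - w) / (y * (w * w)))%C by (field; auto).
  rewrite Cmod_div by (repeat apply Cmult_neq_0; auto).
  rewrite !Cmod_mult.
  set (m := Cmod w) in *. set (r := Cmod (y - w)%C) in *.
  assert (Hr : 0 <= r) by apply Cmod_ge_0.
  replace (2 * r ^ 2 / m ^ 3) with (r * r / (m / 2 * (m * m))) by (field; lra).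
  apply Rmult_le_compat_l; [nra|].
  assert (Hm2 : 0 < m * m) by nra.
  apply Rinv_le_contravar.
  - apply Rmult_lt_0_compat; lra.
  - apply Rmult_le_compat_r; lra.
Qed.

Lemma Cderiv_inv (w : C) : w <> 0%C -> Cderiv Cinv w (- / (w * w))%C.
Proof.
  intros Hw. split; [apply is_linear_scal_l|].
  intros w' Hw'.
  apply (@is_filter_lim_locally_unique _ (AbsRing_NormedModule C_AbsRing)) in Hw'.
  subst w'. intros eps.
  assert (Hm : 0 < Cmod w) by (apply Cmod_gt_0; exact Hw).
  assert (Hm3 : 0 < Cmod w ^ 3) by (apply pow_lt; exact Hm).
  assert (Hd : 0 < Rmin (Cmod w / 2) (eps * Cmod w ^ 3 / 2)).
  { apply Rmin_pos; [lra|]. destruct eps as [e He]; simpl; nra. }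
  exists (mkposreal _ Hd). intros y Hy.
  change (Cmod (y - w)%C < Rmin (Cmod w / 2) (eps * Cmod w ^ 3 / 2)) in Hy.
  change (Cmod (/ y - / w - (y - w) * - / (w * w))%C <= eps * Cmod (y - w)%C).
  assert (Hr1 := Rlt_le_trans _ _ _ Hy (Rmin_l _ _)).
  assert (Hr2 := Rlt_le_trans _ _ _ Hy (Rmin_r _ _)).
  eapply Rle_trans; [apply Cinv_second_order; [exact Hw | lra]|].
  assert (Hr : 0 <= Cmod (y - w)%C) by apply Cmod_ge_0.
  replace (2 * Cmod (y - w)%C ^ 2 / Cmod w ^ 3)
    with (Cmod (y - w)%C * (2 * Cmod (y - w)%C / Cmod w ^ 3)) by (field; lra).
  rewrite (Rmult_comm (pos eps)). apply Rmult_le_compat_l; [exact Hr|].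
  apply (Rmult_le_reg_r (Cmod w ^ 3)); [exact Hm3|].
  unfold Rdiv. rewrite Rmult_assoc, Rinv_l by lra. lra.
Qed.

Lemma Cderiv_div (f g : C -> C) (z lf lg : C) :
  Cderiv f z lf -> Cderiv g z lg -> g z <> 0%C ->
  Cderiv (fun w => (f w / g w)%C) z ((lf * g z - f z * lg) / (g z * g z))%C.
Proof.
  intros Hf Hg Hgz.
  assert (Hinv : Cderiv (fun w => Cinv (g w)) z (scal lg (- / (g z * g z)))%C)
    by exact (is_derive_comp Cinv g z _ _ (Cderiv_inv _ Hgz) (proj1 (Cderiv_absring _ _ _) Hg)).
  apply Cderiv_absring in Hf, Hinv.
  apply Cderiv_absring.
  replace ((lf * g z - f z * lg) / (g z * g z))%C
    with (plus (mult lf (Cinv (g z))) (mult (f z) (scal lg (- / (g z * g z)))%C)).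
  - exact (is_derive_mult f (fun w => Cinv (g w)) z _ _ Hf Hinv Cmult_comm).
  - change ((lf * / g z + f z * (lg * - / (g z * g z)))%C
            = ((lf * g z - f z * lg) / (g z * g z))%C).
    field. exact Hgz.
Qed.

(* Used to compare the Euclidean norm on C with the max-norm on R^2. *)
Lemma sqrt2_lt_2 : sqrt 2 < 2.
Proof.
  rewrite <- (sqrt_square 2) at 2 by lra.
  apply sqrt_lt_1_alt; lra.
Qed.

Lemma Cderiv_Re (G : C -> C) (x y : R) (l : C) :
  Cderiv G (x, y) l ->
  differentiable_pt_lim (fun u v => Re (G (u, v))) x y (Re l) (- Im l).
Proof.
  intros [_ Hd] eps.
  assert (He : 0 < eps / 2) by (destruct eps; simpl; lra).
  specialize (Hd (x, y) (fun P HP => HP) (mkposreal _ He)).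
  apply locally_C in Hd. apply locally_2d_locally.
  eapply filter_imp; [|exact Hd]. intros [u v] Hw. change R in u, v. simpl in Hw |- *.
  set (M := Rmax (Rabs (u - x)) (Rabs (v - y))).
  change (Cmod (G (u, v) - G (x, y) - ((u, v) - (x, y)) * l)%C
          <= eps / 2 * Cmod ((u, v) - (x, y))%C) in Hw.
  assert (HRe : Re (G (u, v)) - Re (G (x, y)) - (Re l * (u - x) + - Im l * (v - y))
                = Re (G (u, v) - G (x, y) - ((u, v) - (x, y)) * l)%C).
  { destruct (G (u, v)), (G (x, y)), l. cbn. ring. }
  assert (Hdist : Cmod ((u, v) - (x, y))%C <= 2 * M).
  { assert (HM : 0 <= M) by (eapply Rle_trans; [apply Rabs_pos | apply Rmax_l]).
    eapply Rle_trans; [apply Cmod_2Rmax|].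
    assert (H2 := sqrt2_lt_2). cbn.
    replace (u + - x) with (u - x) by ring. replace (v + - y) with (v - y) by ring.
    fold M. nra. }
  rewrite HRe. eapply Rle_trans; [apply re_le_Cmod|].
  eapply Rle_trans; [exact Hw|].
  destruct eps as [e Hep]; simpl in *.
  apply (Rle_trans _ (e / 2 * (2 * M))); [apply Rmult_le_compat_l; lra | lra].
Qed.

Lemma differentiable_pt_lim_filterdiff (f : R * R -> R) (x y lx ly : R) :
  differentiable_pt_lim (fun u v => f (u, v)) x y lx ly -> ex_filterdiff f (locally (x, y)).
Proof.
  intros H. apply filterdiff_differentiable_pt_lim in H.
  eexists. eapply (filterdiff_ext_locally (fun u : R * R => f (fst u, snd u)) f); [|exact H].
  apply filter_forall. intros [u v]; reflexivity.
Qed.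

Lemma Re_Ci_mul (w : C) : Re (Ci * w) = - Im w.
Proof. destruct w; cbn; ring. Qed.

Lemma Ci_mul_Ci (w : C) : (Ci * (Ci * w))%C = (- w)%C.
Proof. destruct w as [a b]. unfold Ci, Cmult, Copp. cbn. apply f_equal2; ring. Qed.

(* Partial derivatives of Re F for a primitive F of phi on an open set:
   d/du (Re F) = Re phi and d/dv (Re F) = Re (i phi), so both partials are
   again real parts of holomorphic functions and can be differentiated by
   the same rule. *)
Section RealPartOfPrimitive.

Variables (U : C -> Prop) (F phi : C -> C).
Hypothesis U_open : open U.
Hypothesis F_primitive : forall z, U z -> Cderiv F z (phi z).

Lemma first_partials_Re_primitive (q : C) :
  U q -> pdu (fun r => Re (F r)) q = Re (phi q) /\
         pdv (fun r => Re (F r)) q = Re (Ci * phi q).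
Proof.
  destruct q as [x y]. intros Hq. rewrite Re_Ci_mul.
  exact (differentiable_pt_lim_unique _ _ _ _ _ (Cderiv_Re F x y _ (F_primitive _ Hq))).
Qed.

(* The first partials are real parts of phi and i phi near (x,y), hence
   differentiable there with gradients given by phi' and i phi'. *)
Lemma first_partials_differentiable (x y : R) (l : C) :
  U (x, y) -> Cderiv phi (x, y) l ->
  differentiable_pt_lim (fun u v => pdu (fun r => Re (F r)) (u, v)) x y
    (Re l) (- Im l) /\
  differentiable_pt_lim (fun u v => pdv (fun r => Re (F r)) (u, v)) x y
    (Re (Ci * l)) (- Im (Ci * l)).
Proof.
  intros Hxy Hl.
  assert (Hnear : locally_2d (fun u v => U (u, v)) x y).
  { apply locally_2d_locally. eapply filter_imp; [|exact (U_open _ Hxy)].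
    intros [u v] H; exact H. }
  split; eapply differentiable_pt_lim_ext.
  2: exact (Cderiv_Re phi x y l Hl).
  3: exact (Cderiv_Re (fun z => Ci * phi z)%C x y _ (Cderiv_scal phi _ l Ci Hl)).
  all: eapply locally_2d_impl; [|exact Hnear]; apply locally_2d_forall;
       intros u v Huv; symmetry; apply (first_partials_Re_primitive _ Huv).
Qed.

Lemma second_partials_Re_primitive (q l : C) :
  U q -> Cderiv phi q l ->
  pdu (pdu (fun r => Re (F r))) q = Re l /\
  pdv (pdu (fun r => Re (F r))) q = Re (Ci * l) /\
  pdv (pdv (fun r => Re (F r))) q = Re (Ci * (Ci * l)).
Proof.
  destruct q as [x y]. intros Hq Hl.
  destruct (first_partials_differentiable x y l Hq Hl) as [Hu Hv].
  apply differentiable_pt_lim_unique in Hu, Hv.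
  rewrite !Re_Ci_mul. tauto.
Qed.

Lemma twice_diff_Re_primitive :
  holomorphic_on U phi -> twice_diff_on U (fun r => Re (F r)).
Proof.
  intros Hphi [x y] Hq. destruct (Hphi _ Hq) as [l Hl].
  destruct (first_partials_differentiable x y l Hq Hl) as [Hu Hv].
  repeat split; eapply differentiable_pt_lim_filterdiff; [| exact Hu | exact Hv].
  exact (Cderiv_Re F x y _ (F_primitive _ Hq)).
Qed.

End RealPartOfPrimitive.

Definition reV (a b c : C) : V3 := (Re a, Re b, Re c).

Definition iso_vec (k a c : C) : V3 := reV a (k * a) c.

Definition minimal_normal (u v : V3) : V3 := vscale (/ c3 (cross u v)) (cross u v).

(* Algebra of the isotropic frame x_u = Re (a, k a, c), x_v = Re (i a, k i a, i c),
   with the second derivatives built the same way from (A, P) = (a', c'). *)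
Lemma iso_norm2_pos (a : C) : a <> 0%C -> 0 < Re a ^ 2 + Im a ^ 2.
Proof. intros Ha. rewrite <- Cmod2_alt. apply pow_lt, Cmod_gt_0, Ha. Qed.

Lemma iso_first_form (k a c : C) :
  k = Ci \/ k = (- Ci)%C ->
  idot (iso_vec k a c) (iso_vec k a c) = Cmod a ^ 2 /\
  idot (iso_vec k a c) (iso_vec k (Ci * a) (Ci * c)) = 0 /\
  idot (iso_vec k (Ci * a) (Ci * c)) (iso_vec k (Ci * a) (Ci * c)) = Cmod a ^ 2.
Proof.
  intros Hk. rewrite Cmod2_alt.
  destruct Hk as [-> | ->]; destruct a;
    unfold idot, iso_vec, reV, c1, c2; cbn; repeat split; ring.
Qed.

Lemma iso_normal_c3 (k a c : C) :
  k = Ci \/ k = (- Ci)%C -> a <> 0%C ->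
  c3 (cross (iso_vec k a c) (iso_vec k (Ci * a) (Ci * c))) <> 0.
Proof.
  intros Hk Ha. assert (Hpos := iso_norm2_pos a Ha).
  destruct Hk as [-> | ->]; destruct a, c;
    unfold cross, iso_vec, reV, c1, c2, c3; cbn in *; nra.
Qed.

Lemma iso_second_form (k a c A P : C) :
  k = Ci \/ k = (- Ci)%C -> a <> 0%C ->
  let N := minimal_normal (iso_vec k a c) (iso_vec k (Ci * a) (Ci * c)) in
  let w := (P - c * A / a)%C in
  edot (iso_vec k A P) N = Re w /\
  edot (iso_vec k (Ci * A) (Ci * P)) N = - Im w /\
  edot (iso_vec k (- A) (- P)) N = - Re w.
Proof.
  intros Hk Ha. assert (Hpos := iso_norm2_pos a Ha).
  destruct Hk as [-> | ->]; destruct a, c, A, P;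
    unfold minimal_normal, edot, vscale, cross, iso_vec, reV, c1, c2, c3; cbn in *;
    repeat split; field; nra.
Qed.

Lemma vertical_not_tangent (u v : V3) :
  c3 (cross u v) <> 0 ->
  ~ exists s t : R, vadd (vscale s u) (vscale t v) = (0, 0, 1).
Proof.
  intros Hc [s [t Hst]]. apply Hc.
  destruct u as [[u1 u2] u3], v as [[v1 v2] v3].
  unfold vadd, vscale, cross, c1, c2, c3 in *; cbn in *.
  injection Hst as H1 H2 H3.
  transitivity ((u1 * v2 - u2 * v1) * (s * u3 + t * v3)); [rewrite H3; ring|].
  transitivity (u3 * (v2 * (s * u1 + t * v1) - v1 * (s * u2 + t * v2))
                + v3 * (u1 * (s * u2 + t * v2) - u2 * (s * u1 + t * v1)));
    [ring | rewrite H1, H2; ring].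
Qed.

Lemma conformal_curvatures (x : surface) (p : R * R) (G : R) (w : C) :
  G <> 0 -> g11 x p = G -> g12 x p = 0 -> g22 x p = G ->
  h11 x p = Re w -> h12 x p = - Im w -> h22 x p = - Re w ->
  Hiso x p = 0 /\ Kiso x p = - (Cmod w ^ 2 / G ^ 2).
Proof.
  intros HG E11 E12 E22 F11 F12 F22.
  unfold Hiso, Kiso, detg. rewrite E11, E12, E22, F11, F12, F22, Cmod2_alt.
  split; field; auto.
Qed.

Lemma conformal_factor_nonzero (a : C) : a <> 0%C -> Cmod a ^ 2 <> 0.
Proof. intros Ha. apply pow_nonzero, Rgt_not_eq, Cmod_gt_0, Ha. Qed.

Lemma Cmod_mul_ratio (a d : C) :
  a <> 0%C -> Cmod (a * d)%C ^ 2 / (Cmod a ^ 2) ^ 2 = Cmod (d / a)%C ^ 2.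
Proof.
  intros Ha. assert (Hm : Cmod a <> 0) by (apply Rgt_not_eq, Cmod_gt_0, Ha).
  rewrite Cmod_mult, Cmod_div by exact Ha. field. exact Hm.
Qed.

Section RealPartSurface.

Variables (U : C -> Prop) (F1 F2 F3 phi1 phi2 phi3 : C -> C).
Hypothesis U_open : open U.
Hypothesis F1_primitive : forall z, U z -> Cderiv F1 z (phi1 z).
Hypothesis F2_primitive : forall z, U z -> Cderiv F2 z (phi2 z).
Hypothesis F3_primitive : forall z, U z -> Cderiv F3 z (phi3 z).

Let x : surface := fun q => (Re (F1 q), Re (F2 q), Re (F3 q)).

Lemma Re_surface_derivatives (p l1 l2 l3 : C) :
  U p -> Cderiv phi1 p l1 -> Cderiv phi2 p l2 -> Cderiv phi3 p l3 ->
  Du x p = reV (phi1 p) (phi2 p) (phi3 p) /\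
  Dv x p = reV (Ci * phi1 p) (Ci * phi2 p) (Ci * phi3 p) /\
  Du (Du x) p = reV l1 l2 l3 /\
  Dv (Du x) p = reV (Ci * l1) (Ci * l2) (Ci * l3) /\
  Dv (Dv x) p = reV (Ci * (Ci * l1)) (Ci * (Ci * l2)) (Ci * (Ci * l3)).
Proof.
  intros Hp Hl1 Hl2 Hl3.
  destruct (first_partials_Re_primitive U F1 phi1 F1_primitive p Hp) as [u1 v1].
  destruct (first_partials_Re_primitive U F2 phi2 F2_primitive p Hp) as [u2 v2].
  destruct (first_partials_Re_primitive U F3 phi3 F3_primitive p Hp) as [u3 v3].
  destruct (second_partials_Re_primitive U F1 phi1 U_open F1_primitive p l1 Hp Hl1)
    as (uu1 & uv1 & vv1).
  destruct (second_partials_Re_primitive U F2 phi2 U_open F2_primitive p l2 Hp Hl2)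
    as (uu2 & uv2 & vv2).
  destruct (second_partials_Re_primitive U F3 phi3 U_open F3_primitive p l3 Hp Hl3)
    as (uu3 & uv3 & vv3).
  repeat split; unfold Du, Dv, reV; f_equal; [f_equal| |f_equal| |f_equal| |f_equal| |f_equal|];
    assumption.
Qed.

Variable k : C.
Hypothesis k_isotropic : k = Ci \/ k = (- Ci)%C.
Hypothesis phi2_isotropic : forall z, U z -> phi2 z = (k * phi1 z)%C.
Hypothesis phi1_holomorphic : holomorphic_on U phi1.
Hypothesis phi3_holomorphic : holomorphic_on U phi3.
Hypothesis phi1_nonzero : forall z, U z -> phi1 z <> 0%C.

Lemma isotropic_surface_frame (p : C) :
  U p ->
  exists l1 l3 : C,
    Cderiv phi1 p l1 /\ Cderiv phi3 p l3 /\
    Du x p = iso_vec k (phi1 p) (phi3 p) /\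
    Dv x p = iso_vec k (Ci * phi1 p) (Ci * phi3 p) /\
    Du (Du x) p = iso_vec k l1 l3 /\
    Dv (Du x) p = iso_vec k (Ci * l1) (Ci * l3) /\
    Dv (Dv x) p = iso_vec k (- l1) (- l3).
Proof.
  intros Hp.
  destruct (phi1_holomorphic p Hp) as [l1 Hl1], (phi3_holomorphic p Hp) as [l3 Hl3].
  assert (Hl2 : Cderiv phi2 p (k * l1)%C).
  { apply (Cderiv_ext_open U (fun z => k * phi1 z)%C phi2 p _ U_open Hp).
    - intros z Hz. symmetry. exact (phi2_isotropic z Hz).
    - exact (Cderiv_scal phi1 p l1 k Hl1). }
  exists l1, l3.
  destruct (Re_surface_derivatives p l1 _ l3 Hp Hl1 Hl2 Hl3)
    as (Eu & Ev & Euu & Euv & Evv).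
  rewrite Eu, Ev, Euu, Euv, Evv, (phi2_isotropic p Hp).
  refine (conj Hl1 (conj Hl3 _)).
  unfold iso_vec. repeat split; f_equal; rewrite ?Ci_mul_Ci; ring.
Qed.

Lemma isotropic_surface_normal (p : C) : U p -> c3 (cross (Du x p) (Dv x p)) <> 0.
Proof.
  intros Hp. destruct (isotropic_surface_frame p Hp) as (l1 & l3 & _ & _ & -> & -> & _).
  exact (iso_normal_c3 k (phi1 p) (phi3 p) k_isotropic (phi1_nonzero p Hp)).
Qed.

Lemma isotropic_surface_metric (p : C) :
  U p -> g11 x p = Cmod (phi1 p) ^ 2 /\ g12 x p = 0 /\ g22 x p = Cmod (phi1 p) ^ 2.
Proof.
  intros Hp. destruct (isotropic_surface_frame p Hp) as (l1 & l3 & _ & _ & Eu & Ev & _).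
  unfold g11, g12, g22. rewrite Eu, Ev.
  exact (iso_first_form k (phi1 p) (phi3 p) k_isotropic).
Qed.

Lemma isotropic_surface_second_form (p : C) :
  U p -> exists d : C,
    Cderiv (fun z => (phi3 z / phi1 z)%C) p d /\
    h11 x p = Re (phi1 p * d) /\ h12 x p = - Im (phi1 p * d) /\
    h22 x p = - Re (phi1 p * d).
Proof.
  intros Hp. assert (Ha := phi1_nonzero p Hp).
  destruct (isotropic_surface_frame p Hp)
    as (l1 & l3 & Hl1 & Hl3 & Eu & Ev & Euu & Euv & Evv).
  exists ((l3 * phi1 p - phi3 p * l1) / (phi1 p * phi1 p))%C.
  split; [exact (Cderiv_div phi3 phi1 p l3 l1 Hl3 Hl1 Ha)|].
  replace (phi1 p * ((l3 * phi1 p - phi3 p * l1) / (phi1 p * phi1 p)))%C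
    with (l3 - phi3 p * l1 / phi1 p)%C by (field; exact Ha).
  unfold h11, h12, h22. change (Nm x p) with (minimal_normal (Du x p) (Dv x p)).
  rewrite Eu, Ev, Euu, Euv, Evv.
  exact (iso_second_form k (phi1 p) (phi3 p) l1 l3 k_isotropic Ha).
Qed.

Lemma isotropic_surface_curvatures (p : C) :
  U p -> Hiso x p = 0 /\
  exists d : C,
    Cderiv (fun z => (phi3 z / phi1 z)%C) p d /\
    h11 x p = Re (phi1 p * d) /\ h12 x p = - Im (phi1 p * d) /\
    h22 x p = - Re (phi1 p * d) /\ Kiso x p = - (Cmod (d / phi1 p)%C) ^ 2.
Proof.
  intros Hp. assert (Ha := phi1_nonzero p Hp).
  destruct (isotropic_surface_metric p Hp) as (G11 & G12 & G22).
  destruct (isotropic_surface_second_form p Hp) as (d & Hd & B11 & B12 & B22).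
  destruct (conformal_curvatures x p _ _ (conformal_factor_nonzero _ Ha)
              G11 G12 G22 B11 B12 B22) as [Hmean HK].
  split; [exact Hmean|].
  exists d. refine (conj Hd (conj B11 (conj B12 (conj B22 _)))).
  rewrite HK, Cmod_mul_ratio by exact Ha. reflexivity.
Qed.

End RealPartSurface.

Lemma isotropic_constant (U : C -> Prop) (f g : C -> C) :
  (forall z, U z -> f z = (Ci * g z)%C) \/ (forall z, U z -> f z = (- (Ci * g z))%C) ->
  exists k, (k = Ci \/ k = (- Ci)%C) /\ forall z, U z -> f z = (k * g z)%C.
Proof.
  intros [Hs | Hs]; [exists Ci | exists (- Ci)%C];
    (split; [tauto | intros z Hz; rewrite Hs by exact Hz; ring]).
Qed.

Theorem mainTheorem5 (U : C -> Prop) (z0 : C)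
  (phi1 phi2 phi3 F1 F2 F3 : C -> C) :
  simply_connected_domain U -> U z0 ->
  holomorphic_on U phi1 -> holomorphic_on U phi2 -> holomorphic_on U phi3 ->
  ((forall z, U z -> phi2 z = (Ci * phi1 z)%C) \/
   (forall z, U z -> phi2 z = (- (Ci * phi1 z))%C)) ->
  (forall z, U z -> phi1 z <> 0%C) ->
  integral_from U z0 phi1 F1 ->
  integral_from U z0 phi2 F2 ->
  integral_from U z0 phi3 F3 ->
  let x : surface := fun p => (Re (F1 p), Re (F2 p), Re (F3 p)) in
  immersion_on U x /\ admissible_on U x /\
  (forall p, U p -> Hiso x p = 0) /\
  (forall p, U p ->
     g11 x p = Cmod (phi1 p) ^ 2 /\ g12 x p = 0 /\ g22 x p = Cmod (phi1 p) ^ 2) /\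
  (forall p, U p ->
     exists d : C,
       Cderiv (fun z => (phi3 z / phi1 z)%C) p d /\
       h11 x p = Re (phi1 p * d) /\
       h12 x p = - Im (phi1 p * d) /\
       h22 x p = - Re (phi1 p * d) /\
       Kiso x p = - (Cmod (d / phi1 p)%C) ^ 2).
Proof.
  intros [[HO _] _] _ H1 H2 H3 Hsign Hnz [_ HF1] [_ HF2] [_ HF3] x.
  destruct (isotropic_constant U phi2 phi1 Hsign) as (k & Hk & Hphi2).
  pose proof (isotropic_surface_normal U F1 F2 F3 phi1 phi2 phi3 HO HF1 HF2 HF3
                k Hk Hphi2 H1 H3 Hnz) as Normal.
  pose proof (isotropic_surface_metric U F1 F2 F3 phi1 phi2 phi3 HO HF1 HF2 HF3
                k Hk Hphi2 H1 H3) as Metric.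
  pose proof (isotropic_surface_curvatures U F1 F2 F3 phi1 phi2 phi3 HO HF1 HF2 HF3
                k Hk Hphi2 H1 H3 Hnz) as Curvatures.
  split; [|split; [|split; [|split]]].
  - refine (conj (twice_diff_Re_primitive U F1 phi1 HO HF1 H1)
             (conj (twice_diff_Re_primitive U F2 phi2 HO HF2 H2)
             (conj (twice_diff_Re_primitive U F3 phi3 HO HF3 H3) _))).
    intros p Hp Hcross. apply (Normal p Hp). fold x. rewrite Hcross. reflexivity.
  - intros p Hp. exact (vertical_not_tangent _ _ (Normal p Hp)).
  - intros p Hp. exact (proj1 (Curvatures p Hp)).
  - exact Metric.
  - intros p Hp. exact (proj2 (Curvatures p Hp)).
Qed.
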